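(* Let $N\ge1$, $\mathbf{S}=(\mathsf{SNR}_{s,r},\mathsf{SNR}_{s,1},\dots,\mathsf{SNR}_{s,N},\mathsf{SNR}_{r,1},\dots,\mathsf{SNR}_{r,N})\in[0,\infty)^{2N+1}$, $\rho\in[0,1]$, $\mathsf{C}(x)=\tfrac12\log(1+x)$, and for $j=1,\dots,N$ $$f_j(\rho,\mathbf{S})=\mathsf{SNR}_{s,j}+\mathsf{SNR}_{r,j}+2\rho\sqrt{\mathsf{SNR}_{s,j}\mathsf{SNR}_{r,j}},\qquad g_j(\rho,\mathbf{S})=(1-\rho^2)(\mathsf{SNR}_{s,j}+\mathsf{SNR}_{s,r}),$$ $$R_{CS}(\rho,\mathbf{S})=\min_{1\le j\le N}\min\big(\mathsf{C}(f_j(\rho,\mathbf{S})),\mathsf{C}(g_j(\rho,\mathbf{S}))\big).$$ Then $R_{CS}(\rho,\mathbf{S})$ is concave in $\rho\in[0,1]$ for fixed $\mathbf{S}$, concave in $\mathbf{S}\in[0,\infty)^{2N+1}$ for fixed $\rho$, and the map $(t,\mathbf{S})\mapsto R_{CS}(\sqrt t,\mathbf{S})$ is quasi-concave on $[0,1]\times[0,\infty)^{2N+1}$ (i.e., $R_{CS}$ is quasi-concave in $(\rho^2,\mathbf{S})$).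
   Context: $R_{CS}$ is the cut-set bound expression for a real AWGN multicast relay channel with source $s$, relay $r$, destinations $1,\dots,N$, link SNRs $\mathsf{SNR}_{u,v}\ge0$, and source–relay input correlation coefficient $\rho$. A function $F$ on a convex set is quasi-concave if $F(\lambda x_1+(1-\lambda)x_2)\ge\min(F(x_1),F(x_2))$ for all $x_1,x_2$ and $\lambda\in[0,1]$. *)

From Stdlib Require Import Reals.
Open Scope R_scope.

Definition Ccap (x : R) : R := / 2 * (ln (1 + x) / ln 2).

(* The SNR vector S in [0,oo)^(2N+1) is given by
   ssr = SNR_{s,r},
   ss j = SNR_{s,j+1}, sr j = SNR_{r,j+1}  for j = 0..N-1
   (values of ss, sr at j >= N are irrelevant). *)
Definition f_j (rho : R) (ss sr : nat -> R) (j : nat) : R :=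
  ss j + sr j + 2 * rho * sqrt (ss j * sr j).

Definition g_j (rho : R) (ssr : R) (ss : nat -> R) (j : nat) : R :=
  (1 - rho ^ 2) * (ss j + ssr).

Fixpoint min_upto (F : nat -> R) (n : nat) : R :=
  match n with
  | O => F O
  | S k => Rmin (min_upto F k) (F (S k))
  end.

Definition R_CS (N : nat) (rho ssr : R) (ss sr : nat -> R) : R :=
  min_upto (fun j => Rmin (Ccap (f_j rho ss sr j)) (Ccap (g_j rho ssr ss j)))
           (N - 1).

Definition S_nonneg (N : nat) (ssr : R) (ss sr : nat -> R) : Prop :=
  0 <= ssr /\ (forall j, (j < N)%nat -> 0 <= ss j /\ 0 <= sr j).

Definition cmb (lam : R) (u v : nat -> R) : nat -> R :=
  fun j => lam * u j + (1 - lam) * v j.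

(* Concavity in rho and in S holds link by link: C is concave and increasing,
   f_j is affine in rho and concave in S (the geometric mean sqrt(ab) is concave),
   g_j is concave in rho (1 - rho^2 is) and affine in S, and a finite minimum of
   concave functions is concave.  For quasi-concavity in (t, S) = (rho^2, S) one
   shows that every link has convex superlevel sets.  For g_j this is the
   quasi-concavity of a product of two nonnegative affine functions.  For
   f_j = a + b + 2 sqrt(t a b), a superlevel set {f_j >= c} is, where a + b < c,
   the region 4 t a b >= (c - a - b)^2; at each of its points (A, B) the tangent
   plane of the boundary surface supports the whole superlevel set, so the
   inequality passes to convex combinations. *)

From Stdlib Require Import Reals Lra Psatz Lia.
Open Scope R_scope.

Lemma Rsqr_le_sqrt x y : 0 <= y -> x * x <= y -> x <= sqrt y.
Proof.
  intros Hy Hxy. apply Rsqr_incr_0_var; [|apply sqrt_pos].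
  rewrite Rsqr_sqrt by exact Hy. exact Hxy.
Qed.

Lemma ln_concave u v l : 0 < u -> 0 < v -> 0 <= l <= 1 ->
  l * ln u + (1 - l) * ln v <= ln (l * u + (1 - l) * v).
Proof.
  intros Hu Hv Hl. set (w := l * u + (1 - l) * v).
  assert (Hw : 0 < w) by (unfold w; destruct (Req_dec l 0); subst; nra).
  assert (Htangent : forall x, 0 < x -> ln x <= ln w + (x / w - 1)).
  { intros x Hx.
    replace x with (w * (x / w)) at 1 by (field; lra).
    assert (Hxw : 0 < x / w) by (apply Rdiv_lt_0_compat; lra).
    rewrite ln_mult by lra.
    pose proof (exp_ineq1_le (ln (x / w))) as Hexp. rewrite exp_ln in Hexp by lra.
    lra. }
  pose proof (Htangent u Hu) as Hlu. pose proof (Htangent v Hv) as Hlv.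
  assert (Hsum : l * (ln w + (u / w - 1)) + (1 - l) * (ln w + (v / w - 1)) = ln w)
    by (unfold w in *; field; lra).
  nra.
Qed.

Lemma Ccap_eq x : Ccap x = / (2 * ln 2) * ln (1 + x).
Proof. unfold Ccap. pose proof ln_lt_2. field. lra. Qed.

Lemma Ccap_factor_pos : 0 < / (2 * ln 2).
Proof. apply Rinv_0_lt_compat. pose proof ln_lt_2. lra. Qed.

Lemma Ccap_le x y : 0 <= x -> x <= y -> Ccap x <= Ccap y.
Proof.
  intros Hx Hxy. rewrite !Ccap_eq.
  apply Rmult_le_compat_l; [left; exact Ccap_factor_pos|].
  destruct (Req_dec x y) as [->|Hne]; [lra|].
  left. apply ln_increasing; lra.
Qed.

Lemma Ccap_concave x y z l : 0 <= x -> 0 <= y -> 0 <= l <= 1 ->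
  l * x + (1 - l) * y <= z -> l * Ccap x + (1 - l) * Ccap y <= Ccap z.
Proof.
  intros Hx Hy Hl Hz.
  apply Rle_trans with (Ccap (l * x + (1 - l) * y)); [|apply Ccap_le; nra].
  rewrite !Ccap_eq.
  replace (1 + (l * x + (1 - l) * y)) with (l * (1 + x) + (1 - l) * (1 + y)) by ring.
  pose proof (ln_concave (1 + x) (1 + y) l ltac:(lra) ltac:(lra) Hl).
  pose proof Ccap_factor_pos. nra.
Qed.

Lemma Ccap_quasiconcave x y z : 0 <= x -> 0 <= y -> Rmin x y <= z ->
  Rmin (Ccap x) (Ccap y) <= Ccap z.
Proof.
  intros Hx Hy Hz. destruct (Rle_dec x y) as [Hxy|Hxy].
  - rewrite Rmin_left in Hz by exact Hxy.
    apply Rle_trans with (Ccap x); [apply Rmin_l|apply Ccap_le; lra].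
  - rewrite Rmin_right in Hz by lra.
    apply Rle_trans with (Ccap y); [apply Rmin_r|apply Ccap_le; lra].
Qed.

Lemma Rmin_concave p1 q1 p2 q2 p q l : 0 <= l <= 1 ->
  l * p1 + (1 - l) * p2 <= p -> l * q1 + (1 - l) * q2 <= q ->
  l * Rmin p1 q1 + (1 - l) * Rmin p2 q2 <= Rmin p q.
Proof.
  intros Hl Hp Hq.
  pose proof (Rmin_l p1 q1). pose proof (Rmin_r p1 q1).
  pose proof (Rmin_l p2 q2). pose proof (Rmin_r p2 q2).
  apply Rmin_glb; nra.
Qed.

Lemma Rmin_quasiconcave p1 q1 p2 q2 p q :
  Rmin p1 p2 <= p -> Rmin q1 q2 <= q -> Rmin (Rmin p1 q1) (Rmin p2 q2) <= Rmin p q.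
Proof. intros. unfold Rmin in *. repeat destruct Rle_dec; lra. Qed.

Lemma min_upto_le F n k : (k <= n)%nat -> min_upto F n <= F k.
Proof.
  induction n as [|n IHn]; intros Hk; simpl.
  - replace k with O by lia. lra.
  - destruct (Nat.eq_dec k (S n)) as [->|Hne]; [apply Rmin_r|].
    apply Rle_trans with (min_upto F n); [apply Rmin_l|apply IHn; lia].
Qed.

Lemma min_upto_glb F n m : (forall k, (k <= n)%nat -> m <= F k) -> m <= min_upto F n.
Proof.
  induction n as [|n IHn]; intros Hm; simpl.
  - apply Hm. lia.
  - apply Rmin_glb; [apply IHn; intros; apply Hm|apply Hm]; lia.
Qed.

Lemma min_upto_concave F1 F2 F n l : 0 <= l <= 1 ->
  (forall k, (k <= n)%nat -> l * F1 k + (1 - l) * F2 k <= F k) ->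
  l * min_upto F1 n + (1 - l) * min_upto F2 n <= min_upto F n.
Proof.
  intros Hl HF. apply min_upto_glb. intros k Hk.
  pose proof (min_upto_le F1 n k Hk). pose proof (min_upto_le F2 n k Hk).
  specialize (HF k Hk). nra.
Qed.

Lemma min_upto_quasiconcave F1 F2 F n :
  (forall k, (k <= n)%nat -> Rmin (F1 k) (F2 k) <= F k) ->
  Rmin (min_upto F1 n) (min_upto F2 n) <= min_upto F n.
Proof.
  intros HF. apply min_upto_glb. intros k Hk.
  pose proof (min_upto_le F1 n k Hk). pose proof (min_upto_le F2 n k Hk).
  specialize (HF k Hk). unfold Rmin in *. repeat destruct Rle_dec; lra.
Qed.

Lemma comb_mult_comb x1 y1 x2 y2 l :
  (l * x1 + (1 - l) * x2) * (l * y1 + (1 - l) * y2)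
  = l * l * (x1 * y1) + (1 - l) * (1 - l) * (x2 * y2) + l * (1 - l) * (x1 * y2 + x2 * y1).
Proof. ring. Qed.

Lemma sqrt_mult_concave a1 b1 a2 b2 l :
  0 <= a1 -> 0 <= b1 -> 0 <= a2 -> 0 <= b2 -> 0 <= l <= 1 ->
  l * sqrt (a1 * b1) + (1 - l) * sqrt (a2 * b2)
    <= sqrt ((l * a1 + (1 - l) * a2) * (l * b1 + (1 - l) * b2)).
Proof.
  intros Ha1 Hb1 Ha2 Hb2 Hl.
  set (s1 := sqrt (a1 * b1)). set (s2 := sqrt (a2 * b2)).
  assert (Hs1 : s1 * s1 = a1 * b1) by (apply sqrt_sqrt; nra).
  assert (Hs2 : s2 * s2 = a2 * b2) by (apply sqrt_sqrt; nra).
  pose proof (sqrt_pos (a1 * b1)). pose proof (sqrt_pos (a2 * b2)).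
  assert (Hcross : 2 * (s1 * s2) <= a1 * b2 + a2 * b1).
  { pose proof (pow2_ge_0 (a1 * b2 - a2 * b1)).
    apply Rsqr_incr_0_var; [unfold Rsqr|nra].
    replace (2 * (s1 * s2) * (2 * (s1 * s2))) with (4 * (s1 * s1) * (s2 * s2)) by ring.
    nra. }
  apply Rsqr_le_sqrt; [apply Rmult_le_pos; nra|].
  assert (0 <= l * (1 - l)) by nra.
  rewrite !comb_mult_comb, Hs1, Hs2.
  assert (l * (1 - l) * (2 * (s1 * s2)) <= l * (1 - l) * (a1 * b2 + a2 * b1))
    by (apply Rmult_le_compat_l; lra).
  lra.
Qed.

Lemma mult_quasiconcave x1 y1 x2 y2 l :
  0 <= x1 -> 0 <= y1 -> 0 <= x2 -> 0 <= y2 -> 0 <= l <= 1 ->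
  Rmin (x1 * y1) (x2 * y2) <= (l * x1 + (1 - l) * x2) * (l * y1 + (1 - l) * y2).
Proof.
  intros Hx1 Hy1 Hx2 Hy2 Hl. set (m := Rmin (x1 * y1) (x2 * y2)).
  assert (Hm1 : m <= x1 * y1) by apply Rmin_l.
  assert (Hm2 : m <= x2 * y2) by apply Rmin_r.
  assert (Hm : 0 <= m) by (unfold m, Rmin; destruct Rle_dec; nra).
  assert (Hcross : 2 * m <= x1 * y2 + x2 * y1).
  { pose proof (pow2_ge_0 (x1 * y2 - x2 * y1)).
    assert (m * m <= (x1 * y1) * (x2 * y2)) by (apply Rmult_le_compat; lra).
    apply Rsqr_incr_0_var; [unfold Rsqr|]; nra. }
  assert (0 <= l * (1 - l)) by nra.
  assert (l * (1 - l) * (2 * m) <= l * (1 - l) * (x1 * y2 + x2 * y1))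
    by (apply Rmult_le_compat_l; lra).
  assert (l * l * m <= l * l * (x1 * y1)) by (apply Rmult_le_compat_l; nra).
  assert ((1 - l) * (1 - l) * m <= (1 - l) * (1 - l) * (x2 * y2))
    by (apply Rmult_le_compat_l; nra).
  rewrite comb_mult_comb. nra.
Qed.

(* The difference of the two sides equals A^2 B^2 u^2 minus a b times the left side
   of [coherent_snr_tangent], where u = U + A + B - a - b. *)
Lemma tangent_gap A B U a b : 0 < A -> 0 < B -> 0 < U -> 0 <= a -> 0 <= b ->
  U ^ 2 * (a * b) * ((a - A) * (b - B))
    <= (A * B * (U + A + B - a - b) - a * b * U) ^ 2.
Proof.
  intros HA HB HU Ha Hb.
  destruct (Rle_dec ((a - A) * (b - B)) 0) as [Hpq|Hpq].
  - assert (0 <= U ^ 2 * (a * b)) by (apply Rmult_le_pos; nra).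
    pose proof (pow2_ge_0 (A * B * (U + A + B - a - b) - a * b * U)). nra.
  - apply Rnot_le_lt in Hpq.
    set (Y := a * (b - B) + b * (a - A)).
    set (Z := A * B * ((a - A) + (b - B)) + U / 2 * (A * (b - B) + B * (a - A))).
    assert (HYZ : 0 <= Y * Z).
    { destruct (Rle_dec A a).
      - assert (0 < b - B) by nra. assert (0 < a - A) by nra.
        assert (0 <= Y) by (unfold Y; nra).
        assert (0 <= A * B * ((a - A) + (b - B))) by (apply Rmult_le_pos; nra).
        assert (0 <= U / 2 * (A * (b - B) + B * (a - A))) by (apply Rmult_le_pos; nra).
        apply Rmult_le_pos; unfold Z; lra.
      - assert (b - B < 0) by nra.
        assert (Y <= 0) by (unfold Y; nra).
        assert (0 <= A * B * - ((a - A) + (b - B))) by (apply Rmult_le_pos; nra).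
        assert (0 <= U / 2 * - (A * (b - B) + B * (a - A))) by (apply Rmult_le_pos; nra).
        assert (Z <= 0) by (unfold Z; lra). nra. }
    assert (Hamgm : 4 * (a * (b - B)) * (b * (a - A)) <= Y ^ 2)
      by (pose proof (pow2_ge_0 (a * (b - B) - b * (a - A))); unfold Y; nra).
    replace ((A * B * (U + A + B - a - b) - a * b * U) ^ 2)
      with (Z ^ 2 + U * (Y * Z) + U ^ 2 * Y ^ 2 / 4) by (unfold Y, Z; field).
    pose proof (pow2_ge_0 Z). assert (0 <= U * (Y * Z)) by (apply Rmult_le_pos; lra).
    nra.
Qed.

Definition coherent_snr (t a b : R) : R := a + b + 2 * sqrt t * sqrt (a * b).

Lemma coherent_snr_ge_sum t a b : a + b <= coherent_snr t a b.
Proof.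
  unfold coherent_snr. pose proof (sqrt_pos t). pose proof (sqrt_pos (a * b)). nra.
Qed.

Lemma coherent_snr_0_l t b : coherent_snr t 0 b = b.
Proof. unfold coherent_snr. rewrite Rmult_0_l, sqrt_0. ring. Qed.

Lemma coherent_snr_0_r t a : coherent_snr t a 0 = a.
Proof. unfold coherent_snr. rewrite Rmult_0_r, sqrt_0. ring. Qed.

Lemma coherent_snr_tangent A B U t a b :
  0 < A -> 0 < B -> 0 < U -> 0 <= t -> 0 <= a -> 0 <= b ->
  U + A + B <= coherent_snr t a b ->
  U ^ 2 * A * B + 2 * A * B * U * (U + A + B - a - b) - U ^ 2 * (B * a + A * b)
    <= 4 * A ^ 2 * B ^ 2 * t.
Proof.
  intros HA HB HU Ht Ha Hb Hc. unfold coherent_snr in Hc.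
  assert (0 <= 4 * A ^ 2 * B ^ 2 * t) by (apply Rmult_le_pos; nra).
  set (u := U + A + B - a - b).
  destruct (Rle_dec u 0) as [Hu|Hu].
  - assert (A * B - B * a - A * b <= 0).
    { destruct (Rle_dec A a).
      - assert (0 <= B * (a - A)) by (apply Rmult_le_pos; lra).
        assert (0 <= A * b) by (apply Rmult_le_pos; lra). lra.
      - assert (0 <= A * (b - B)) by (apply Rmult_le_pos; unfold u in Hu; lra).
        assert (0 <= B * a) by (apply Rmult_le_pos; lra). lra. }
    assert (0 <= U ^ 2) by nra. assert (0 <= A * B * U) by (apply Rmult_le_pos; nra).
    nra.
  - assert (Htab : 0 <= t * (a * b)) by (apply Rmult_le_pos; nra).
    rewrite Rmult_assoc, <- sqrt_mult in Hc by nra.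
    pose proof (sqrt_sqrt _ Htab) as Hs. pose proof (sqrt_pos (t * (a * b))).
    apply Rnot_le_lt in Hu.
    assert (Hus : u <= 2 * sqrt (t * (a * b))) by (unfold u; lra).
    assert (Hsq : u * u <= 4 * (t * (a * b))).
    { pose proof (Rmult_le_compat u _ u _ ltac:(lra) ltac:(lra) Hus Hus). nra. }
    assert (Hab : 0 < a * b) by (pose proof (sqrt_pos t); nra).
    pose proof (tangent_gap A B U a b HA HB HU Ha Hb) as Hgap. fold u in Hgap.
    apply Rmult_le_reg_l with (a * b); [exact Hab|].
    assert (A ^ 2 * B ^ 2 * (u * u) <= A ^ 2 * B ^ 2 * (4 * (t * (a * b))))
      by (apply Rmult_le_compat_l; nra).
    replace u with (U + A + B - a - b) in * by reflexivity. nra.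
Qed.

Lemma coherent_snr_quasiconcave t1 a1 b1 t2 a2 b2 l c :
  0 <= t1 -> 0 <= t2 -> 0 <= a1 -> 0 <= b1 -> 0 <= a2 -> 0 <= b2 -> 0 <= l <= 1 ->
  c <= coherent_snr t1 a1 b1 -> c <= coherent_snr t2 a2 b2 ->
  c <= coherent_snr (l * t1 + (1 - l) * t2) (l * a1 + (1 - l) * a2) (l * b1 + (1 - l) * b2).
Proof.
  intros Ht1 Ht2 Ha1 Hb1 Ha2 Hb2 Hl Hc1 Hc2.
  destruct (Req_dec l 0) as [->|Hl0].
  { rewrite Rminus_0_r, !Rmult_0_l, !Rmult_1_l, !Rplus_0_l. exact Hc2. }
  destruct (Req_dec l 1) as [->|Hl1].
  { rewrite Rminus_diag, !Rmult_0_l, !Rmult_1_l, !Rplus_0_r. exact Hc1. }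
  set (T := l * t1 + (1 - l) * t2).
  set (A := l * a1 + (1 - l) * a2).
  set (B := l * b1 + (1 - l) * b2).
  destruct (Rle_dec c (A + B)) as [HcAB|HcAB].
  { pose proof (coherent_snr_ge_sum T A B). lra. }
  assert (HA : 0 < A).
  { destruct (Req_dec A 0) as [HA0|HA0]; [|unfold A in *; nra].
    assert (a1 = 0) by (unfold A in HA0; nra). assert (a2 = 0) by (unfold A in HA0; nra).
    subst a1 a2. rewrite coherent_snr_0_l in Hc1, Hc2. unfold A, B in HcAB. nra. }
  assert (HB : 0 < B).
  { destruct (Req_dec B 0) as [HB0|HB0]; [|unfold B in *; nra].
    assert (b1 = 0) by (unfold B in HB0; nra). assert (b2 = 0) by (unfold B in HB0; nra).
    subst b1 b2. rewrite coherent_snr_0_r in Hc1, Hc2. unfold A, B in HcAB. nra. }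
  set (U := c - A - B).
  assert (HU : 0 < U) by (unfold U; lra).
  replace c with (U + A + B) in Hc1, Hc2 by (unfold U; ring).
  pose proof (coherent_snr_tangent A B U t1 a1 b1 HA HB HU Ht1 Ha1 Hb1 Hc1) as Htan1.
  pose proof (coherent_snr_tangent A B U t2 a2 b2 HA HB HU Ht2 Ha2 Hb2 Hc2) as Htan2.
  (* averaging the two tangent inequalities evaluates them at (T, A, B) *)
  assert (Havg : U ^ 2 * A * B <= 4 * A ^ 2 * B ^ 2 * T).
  { apply Rmult_le_compat_l with (r := l) in Htan1; [|lra].
    apply Rmult_le_compat_l with (r := 1 - l) in Htan2; [|lra].
    replace (U ^ 2 * A * B) with
      (l * (U ^ 2 * A * B + 2 * A * B * U * (U + A + B - a1 - b1) - U ^ 2 * (B * a1 + A * b1))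
       + (1 - l) * (U ^ 2 * A * B + 2 * A * B * U * (U + A + B - a2 - b2) - U ^ 2 * (B * a2 + A * b2)))
      by (unfold A, B; ring).
    unfold T. lra. }
  assert (HUU : U * U <= 4 * T * (A * B)).
  { apply Rmult_le_reg_l with (A * B); [nra|]. nra. }
  assert (HTAB : 0 <= T * (A * B)) by (apply Rmult_le_pos; [unfold T|]; nra).
  assert (U / 2 <= sqrt (T * (A * B))) by (apply Rsqr_le_sqrt; nra).
  unfold coherent_snr. rewrite Rmult_assoc, <- sqrt_mult by (unfold T; nra).
  unfold U in *. lra.
Qed.

Lemma f_j_nonneg rho ss sr j : 0 <= rho -> 0 <= ss j -> 0 <= sr j -> 0 <= f_j rho ss sr j.
Proof. intros. unfold f_j. pose proof (sqrt_pos (ss j * sr j)). nra. Qed.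

Lemma g_j_nonneg rho ssr ss j : 0 <= rho <= 1 -> 0 <= ssr -> 0 <= ss j ->
  0 <= g_j rho ssr ss j.
Proof. intros. unfold g_j. apply Rmult_le_pos; nra. Qed.

Lemma f_j_affine_rho rho1 rho2 l ss sr j :
  f_j (l * rho1 + (1 - l) * rho2) ss sr j = l * f_j rho1 ss sr j + (1 - l) * f_j rho2 ss sr j.
Proof. unfold f_j. ring. Qed.

Lemma g_j_concave_rho rho1 rho2 l ssr ss j : 0 <= l <= 1 -> 0 <= ssr -> 0 <= ss j ->
  l * g_j rho1 ssr ss j + (1 - l) * g_j rho2 ssr ss j <= g_j (l * rho1 + (1 - l) * rho2) ssr ss j.
Proof.
  intros Hl Hssr Hss. unfold g_j.
  assert (0 <= l * (1 - l) * (rho1 - rho2) ^ 2)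
    by (apply Rmult_le_pos; [nra|apply pow2_ge_0]).
  replace (l * ((1 - rho1 ^ 2) * (ss j + ssr)) + (1 - l) * ((1 - rho2 ^ 2) * (ss j + ssr)))
    with (g_j (l * rho1 + (1 - l) * rho2) ssr ss j
          - l * (1 - l) * (rho1 - rho2) ^ 2 * (ss j + ssr)) by (unfold g_j; ring).
  unfold g_j. nra.
Qed.

Lemma f_j_concave_S rho l ss1 sr1 ss2 sr2 j : 0 <= rho -> 0 <= l <= 1 ->
  0 <= ss1 j -> 0 <= sr1 j -> 0 <= ss2 j -> 0 <= sr2 j ->
  l * f_j rho ss1 sr1 j + (1 - l) * f_j rho ss2 sr2 j
    <= f_j rho (cmb l ss1 ss2) (cmb l sr1 sr2) j.
Proof.
  intros Hrho Hl Ha1 Hb1 Ha2 Hb2. unfold f_j, cmb.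
  pose proof (sqrt_mult_concave (ss1 j) (sr1 j) (ss2 j) (sr2 j) l Ha1 Hb1 Ha2 Hb2 Hl).
  nra.
Qed.

Lemma g_j_affine_S rho l ssr1 ssr2 ss1 ss2 j :
  g_j rho (l * ssr1 + (1 - l) * ssr2) (cmb l ss1 ss2) j
    = l * g_j rho ssr1 ss1 j + (1 - l) * g_j rho ssr2 ss2 j.
Proof. unfold g_j, cmb. ring. Qed.

Lemma f_j_quasiconcave t1 t2 l ss1 sr1 ss2 sr2 j :
  0 <= t1 -> 0 <= t2 -> 0 <= l <= 1 ->
  0 <= ss1 j -> 0 <= sr1 j -> 0 <= ss2 j -> 0 <= sr2 j ->
  Rmin (f_j (sqrt t1) ss1 sr1 j) (f_j (sqrt t2) ss2 sr2 j)
    <= f_j (sqrt (l * t1 + (1 - l) * t2)) (cmb l ss1 ss2) (cmb l sr1 sr2) j.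
Proof.
  intros. apply coherent_snr_quasiconcave; auto; [apply Rmin_l|apply Rmin_r].
Qed.

Lemma g_j_quasiconcave t1 t2 l ssr1 ssr2 ss1 ss2 j :
  0 <= t1 <= 1 -> 0 <= t2 <= 1 -> 0 <= l <= 1 ->
  0 <= ssr1 -> 0 <= ssr2 -> 0 <= ss1 j -> 0 <= ss2 j ->
  Rmin (g_j (sqrt t1) ssr1 ss1 j) (g_j (sqrt t2) ssr2 ss2 j)
    <= g_j (sqrt (l * t1 + (1 - l) * t2)) (l * ssr1 + (1 - l) * ssr2) (cmb l ss1 ss2) j.
Proof.
  intros. unfold g_j, cmb.
  rewrite !pow2_sqrt by nra.
  replace (1 - (l * t1 + (1 - l) * t2)) with (l * (1 - t1) + (1 - l) * (1 - t2)) by ring.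
  replace (l * ss1 j + (1 - l) * ss2 j + (l * ssr1 + (1 - l) * ssr2))
    with (l * (ss1 j + ssr1) + (1 - l) * (ss2 j + ssr2)) by ring.
  apply mult_quasiconcave; lra.
Qed.

Definition link_rate (rho ssr : R) (ss sr : nat -> R) (j : nat) : R :=
  Rmin (Ccap (f_j rho ss sr j)) (Ccap (g_j rho ssr ss j)).

Lemma link_rate_concave_rho rho1 rho2 l ssr ss sr j :
  0 <= rho1 <= 1 -> 0 <= rho2 <= 1 -> 0 <= l <= 1 ->
  0 <= ssr -> 0 <= ss j -> 0 <= sr j ->
  l * link_rate rho1 ssr ss sr j + (1 - l) * link_rate rho2 ssr ss sr j
    <= link_rate (l * rho1 + (1 - l) * rho2) ssr ss sr j.
Proof.
  intros Hr1 Hr2 Hl Hssr Hss Hsr.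
  apply Rmin_concave; [exact Hl| |]; apply Ccap_concave; try exact Hl.
  - apply f_j_nonneg; lra.
  - apply f_j_nonneg; lra.
  - rewrite f_j_affine_rho. lra.
  - apply g_j_nonneg; lra.
  - apply g_j_nonneg; lra.
  - apply g_j_concave_rho; assumption.
Qed.

Lemma link_rate_concave_S rho l ssr1 ssr2 ss1 sr1 ss2 sr2 j :
  0 <= rho <= 1 -> 0 <= l <= 1 -> 0 <= ssr1 -> 0 <= ssr2 ->
  0 <= ss1 j -> 0 <= sr1 j -> 0 <= ss2 j -> 0 <= sr2 j ->
  l * link_rate rho ssr1 ss1 sr1 j + (1 - l) * link_rate rho ssr2 ss2 sr2 j
    <= link_rate rho (l * ssr1 + (1 - l) * ssr2) (cmb l ss1 ss2) (cmb l sr1 sr2) j.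
Proof.
  intros Hr Hl Hs1 Hs2 Ha1 Hb1 Ha2 Hb2.
  apply Rmin_concave; [exact Hl| |]; apply Ccap_concave; try exact Hl.
  - apply f_j_nonneg; lra.
  - apply f_j_nonneg; lra.
  - apply f_j_concave_S; assumption || lra.
  - apply g_j_nonneg; lra.
  - apply g_j_nonneg; lra.
  - rewrite g_j_affine_S. lra.
Qed.

Lemma link_rate_quasiconcave t1 t2 l ssr1 ssr2 ss1 sr1 ss2 sr2 j :
  0 <= t1 <= 1 -> 0 <= t2 <= 1 -> 0 <= l <= 1 -> 0 <= ssr1 -> 0 <= ssr2 ->
  0 <= ss1 j -> 0 <= sr1 j -> 0 <= ss2 j -> 0 <= sr2 j ->
  Rmin (link_rate (sqrt t1) ssr1 ss1 sr1 j) (link_rate (sqrt t2) ssr2 ss2 sr2 j)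
    <= link_rate (sqrt (l * t1 + (1 - l) * t2)) (l * ssr1 + (1 - l) * ssr2)
                 (cmb l ss1 ss2) (cmb l sr1 sr2) j.
Proof.
  intros Ht1 Ht2 Hl Hs1 Hs2 Ha1 Hb1 Ha2 Hb2.
  pose proof (sqrt_le_1_alt t1 1 ltac:(lra)). pose proof (sqrt_le_1_alt t2 1 ltac:(lra)).
  rewrite sqrt_1 in *.
  pose proof (sqrt_pos t1). pose proof (sqrt_pos t2).
  apply Rmin_quasiconcave; apply Ccap_quasiconcave.
  - apply f_j_nonneg; lra.
  - apply f_j_nonneg; lra.
  - apply f_j_quasiconcave; lra.
  - apply g_j_nonneg; lra.
  - apply g_j_nonneg; lra.
  - apply g_j_quasiconcave; lra.
Qed.

Theorem theorem1 (N : nat) (HN : (1 <= N)%nat) :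
  (* concave in rho on [0,1] for fixed S *)
  (forall (ssr : R) (ss sr : nat -> R), S_nonneg N ssr ss sr ->
   forall rho1 rho2 lam : R,
     0 <= rho1 <= 1 -> 0 <= rho2 <= 1 -> 0 <= lam <= 1 ->
     lam * R_CS N rho1 ssr ss sr + (1 - lam) * R_CS N rho2 ssr ss sr
       <= R_CS N (lam * rho1 + (1 - lam) * rho2) ssr ss sr)
  /\
  (* concave in S on [0,oo)^(2N+1) for fixed rho *)
  (forall rho : R, 0 <= rho <= 1 ->
   forall (ssr1 ssr2 : R) (ss1 sr1 ss2 sr2 : nat -> R) (lam : R),
     S_nonneg N ssr1 ss1 sr1 -> S_nonneg N ssr2 ss2 sr2 -> 0 <= lam <= 1 ->
     lam * R_CS N rho ssr1 ss1 sr1 + (1 - lam) * R_CS N rho ssr2 ss2 sr2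
       <= R_CS N rho (lam * ssr1 + (1 - lam) * ssr2)
                     (cmb lam ss1 ss2) (cmb lam sr1 sr2))
  /\
  (* (t, S) |-> R_CS (sqrt t) S is quasi-concave on [0,1] x [0,oo)^(2N+1) *)
  (forall (t1 t2 ssr1 ssr2 : R) (ss1 sr1 ss2 sr2 : nat -> R) (lam : R),
     0 <= t1 <= 1 -> 0 <= t2 <= 1 ->
     S_nonneg N ssr1 ss1 sr1 -> S_nonneg N ssr2 ss2 sr2 -> 0 <= lam <= 1 ->
     Rmin (R_CS N (sqrt t1) ssr1 ss1 sr1) (R_CS N (sqrt t2) ssr2 ss2 sr2)
       <= R_CS N (sqrt (lam * t1 + (1 - lam) * t2))
                 (lam * ssr1 + (1 - lam) * ssr2)
                 (cmb lam ss1 ss2) (cmb lam sr1 sr2)).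
Proof.
  split; [|split].
  - intros ssr ss sr [Hssr HS] rho1 rho2 l Hr1 Hr2 Hl.
    apply min_upto_concave; [exact Hl|]. intros j Hj.
    destruct (HS j ltac:(lia)) as [Hss Hsr].
    apply link_rate_concave_rho; assumption.
  - intros rho Hr ssr1 ssr2 ss1 sr1 ss2 sr2 l [Hs1 HS1] [Hs2 HS2] Hl.
    apply min_upto_concave; [exact Hl|]. intros j Hj.
    destruct (HS1 j ltac:(lia)) as [Ha1 Hb1]. destruct (HS2 j ltac:(lia)) as [Ha2 Hb2].
    apply link_rate_concave_S; assumption.
  - intros t1 t2 ssr1 ssr2 ss1 sr1 ss2 sr2 l Ht1 Ht2 [Hs1 HS1] [Hs2 HS2] Hl.
    apply min_upto_quasiconcave. intros j Hj.
    destruct (HS1 j ltac:(lia)) as [Ha1 Hb1]. destruct (HS2 j ltac:(lia)) as [Ha2 Hb2].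
    apply link_rate_quasiconcave; assumption.
Qed.
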